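(* Let $\mathcal A$ be the category of all topological abelian groups and $\mathcal A_2$ the category of all Hausdorff topological abelian groups. Every subcategory $\mathcal B$ of $\mathcal A$ that is an $\mathcal{SC}$-variety has a unique tensor product, and every subcategory $\mathcal B_2$ of $\mathcal A_2$ that is an $\overline{\mathcal{SC}}$-variety has a unique tensor product.
   Context: A non-empty class of topological groups is an $\mathcal{SC}$-variety (resp. $\overline{\mathcal{SC}}$-variety) if it is closed under taking arbitrary subgroups (resp. closed subgroups) and topological products. A continuous bihomomorphism $b:G\times H\to A$ is separately a continuous homomorphism in each variable and continuous at $(0,0)$. For $G,H$ in a subcategory $\mathcal B$, a $\mathcal B$-tensor product is a pair $(T,\otimes_{\mathcal B})$ with $T\in\mathcal B$ and $\otimes_{\mathcal B}:G\times H\to T$ a continuous bihomomorphism such that every continuous bihomomorphism $b:G\times H\to B$, $B\in\mathcal B$, factors as $b=\tilde b\circ\otimes_{\mathcal B}$ for a continuous homomorphism $\tilde b:T\to B$. ''Has a unique tensor product'' means: for all $G,H\in\mathcal B$ a $\mathcal B$-tensor product exists whose map $\otimes_{\mathcal B}$ is an epi-bihomomorphism (any two homomorphisms $h_1,h_2$ on $T$ with $h_1\circ\otimes_{\mathcal B}=h_2\circ\otimes_{\mathcal B}$ coincide), and such a tensor product is unique up to topological isomorphism. *)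

(* Topological abelian groups are the library's
   [topologicalZmodType] (tvs.v): a Zmodule with a topology for which
   addition and opposite are continuous. *)
From HB Require Import structures.
From mathcomp Require Import all_boot all_order all_algebra.
From mathcomp Require Import all_classical all_reals all_analysis.
Set Implicit Arguments. Unset Strict Implicit. Unset Printing Implicit Defensive.
Import Order.TTheory GRing.Theory Num.Theory.
Local Open Scope classical_set_scope.
Local Open Scope ring_scope.

Definition tgclass := topologicalZmodType -> Prop.

Definition cont_hom (G H : topologicalZmodType) (f : G -> H) : Prop :=
  (forall x y : G, f (x - y) = f x - f y) /\ continuous f.

Definition tembedding (H G : topologicalZmodType) (f : H -> G) : Prop :=
  [/\ cont_hom f, injective f &
      forall U : set H, open U -> exists V : set G, open V /\ U = f @^-1` V].

(* (P, p) is a topological product of the family F: P is algebraically the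
   product (via the projections p i) and carries the product (initial)
   topology. *)
Definition is_tproduct (I : Type) (F : I -> topologicalZmodType)
    (P : topologicalZmodType) (p : forall i, P -> F i) : Prop :=
  [/\ forall i, cont_hom (p i),
      forall x : (forall i, F i), exists! y : P, forall i, p i y = x i &
      forall (X : topologicalType) (f : X -> P),
        continuous f <-> forall i, continuous (p i \o f)].

(* closed under taking subgroups (up to topological isomorphism) *)
Definition subgroup_closed (B : tgclass) : Prop :=
  forall (G H : topologicalZmodType) (f : H -> G), B G -> tembedding f -> B H.

(* closed under taking closed subgroups (up to topological isomorphism) *)
Definition closed_subgroup_closed (B : tgclass) : Prop :=
  forall (G H : topologicalZmodType) (f : H -> G),
    B G -> tembedding f -> closed (range f) -> B H.

Definition product_closed (B : tgclass) : Prop :=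
  forall (I : Type) (F : I -> topologicalZmodType) (P : topologicalZmodType)
    (p : forall i, P -> F i), (forall i, B (F i)) -> is_tproduct p -> B P.

Definition SC_variety (B : tgclass) : Prop :=
  [/\ exists G, B G, subgroup_closed B & product_closed B].

Definition SCbar_variety_H (B : tgclass) : Prop :=
  [/\ forall G, B G -> hausdorff_space G,
      exists G, B G, closed_subgroup_closed B & product_closed B].

Definition cont_bihom (G H A : topologicalZmodType) (b : G -> H -> A) : Prop :=
  [/\ forall x : G, cont_hom (b x),
      forall y : H, cont_hom (fun x => b x y) &
      continuous_at ((0 : G), (0 : H)) (fun z : G * H => b z.1 z.2)].

Definition is_tensor (B : tgclass) (G H T : topologicalZmodType)
    (t : G -> H -> T) : Prop :=
  [/\ B T, cont_bihom t &
      forall (A : topologicalZmodType) (b : G -> H -> A), B A -> cont_bihom b ->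
        exists bt : T -> A, cont_hom bt /\ forall x y, b x y = bt (t x y)].

Definition epi_bihom (B : tgclass) (G H T : topologicalZmodType)
    (t : G -> H -> T) : Prop :=
  forall (A : topologicalZmodType) (h1 h2 : T -> A), B A ->
    cont_hom h1 -> cont_hom h2 -> (forall x y, h1 (t x y) = h2 (t x y)) ->
    forall z, h1 z = h2 z.

Definition topiso (T T' : topologicalZmodType) (phi : T -> T') : Prop :=
  cont_hom phi /\
  exists psi : T' -> T, [/\ cancel phi psi, cancel psi phi & continuous psi].

Definition has_unique_tensor (B : tgclass) : Prop :=
  forall G H : topologicalZmodType, B G -> B H ->
    (exists (T : topologicalZmodType) (t : G -> H -> T),
        is_tensor B t /\ epi_bihom B t) /\
    (forall (T T' : topologicalZmodType) (t : G -> H -> T) (t' : G -> H -> T'),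
        is_tensor B t -> epi_bihom B t -> is_tensor B t' -> epi_bihom B t' ->
        exists phi : T -> T', topiso phi /\ forall x y, phi (t x y) = t' x y).

From HB Require Import structures.
From mathcomp Require Import all_boot all_order all_algebra.
From mathcomp Require Import all_classical all_reals all_analysis.
Set Implicit Arguments. Unset Strict Implicit. Unset Printing Implicit Defensive.
Import Order.TTheory GRing.Theory Num.Theory.
Local Open Scope classical_set_scope.
Local Open Scope ring_scope.

(** Index a product of groups in [B] by all continuous bihomomorphisms
    [G * H -> F] with [F] in [B] whose carrier is a subset of a fixed type [C];
    the product [P] lies in [B] and the diagonal [t0 : G * H -> P] is a
    continuous bihomomorphism.  Choosing [C] large enough, every continuous
    bihomomorphism [b : G * H -> A] with [A] in [B] factors through one factor:
    the subgroup [S] generated by the image of [b] (for an SC-variety), or its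
    closure (for a Hausdorff SC-bar-variety), is in [B] and codes injectively
    into [C] -- an element of [S] by the set of formal sums evaluating to it,
    an element of its closure by the trace of its neighbourhood filter on formal
    sums, which determines it since [A] is Hausdorff.  The tensor product is the
    subgroup generated by the image of [t0] (resp. its closure) in [P]: it is in
    [B], and since the image of [t0] generates it (resp. is dense in it), [t0]
    is an epi-bihomomorphism, which also makes the tensor product unique. *)

Lemma continuousB_at (X : topologicalType) (M : topologicalZmodType) (g h : X -> M) x :
  {for x, continuous g} -> {for x, continuous h} -> {for x, continuous (fun z => g z - h z)}.
Proof.
move=> gx hx; apply: (@continuous_comp _ _ _ (fun z => (g z, h z)) (fun mn : M * M => mn.1 - mn.2)).
  exact: cvg_pair.
exact: sub_continuous.
Qed.

Section ProductTopology.
Variables (I : Type) (K : I -> topologicalType).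

Lemma prod_topology_cvgP (F : set_system (prod_topology K)) (p : prod_topology K) :
  Filter F -> F --> p <-> forall i, (fun q : prod_topology K => q i) @ F --> p i.
Proof.
move=> FF; rewrite /= (cvg_sup _ _ FF); split => Fp i.
  apply: cvg_trans (@initial_continuous _ _ (fun q : prod_topology K => q i) p).
  exact: (cvg_app (fun q : initial_topology (fun q : prod_topology K => q i) => q i) (Fp i)).
move=> A; have /= -> := @nbhsE (initial_topology (fun q : prod_topology K => q i)) p.
move=> -[_ [[V oV <-] Vp] VA].
by apply: (filterS VA); apply: Fp; exact: open_nbhs_nbhs.
Qed.

Lemma prod_topology_continuousP (X : topologicalType) (g : X -> prod_topology K) x :
  {for x, continuous g} <-> forall i, {for x, continuous (fun z => g z i)}.
Proof. exact: prod_topology_cvgP. Qed.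

Lemma prod_topology_proj_continuous i : continuous (fun q : prod_topology K => q i).
Proof. by move=> q; apply: (proj1 (prod_topology_continuousP id q)); exact: cvg_id. Qed.

End ProductTopology.

Section ProductGroup.
Variables (I : Type) (F : I -> topologicalZmodType).
Local Notation P := (prod_topology F).

Let add (p q : P) : P := fun i => p i + q i.
Let opp (p : P) : P := fun i => - p i.
Let addA : associative add.
Proof. by move=> p q r; apply: functional_extensionality_dep => i; exact: addrA. Qed.
Let addC : commutative add.
Proof. by move=> p q; apply: functional_extensionality_dep => i; exact: addrC. Qed.
Let add0 : left_id (fun i => 0 : F i) add.
Proof. by move=> p; apply: functional_extensionality_dep => i; exact: add0r. Qed.
Let addN : left_inverse (fun i => 0 : F i) opp add.
Proof. by move=> p; apply: functional_extensionality_dep => i; exact: addNr. Qed.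

HB.instance Definition _ := GRing.isZmodule.Build P addA addC add0 addN.

Let sub_cont : continuous (fun pq : P * P => pq.1 - pq.2).
Proof.
move=> pq; apply/prod_topology_continuousP => i.
have proj_cont := @prod_topology_proj_continuous I F i.
by apply: continuousB_at; apply: continuous_comp (proj_cont _); [exact: cvg_fst | exact: cvg_snd].
Qed.

HB.instance Definition _ :=
  PreTopologicalNmodule_isTopologicalZmodule.Build P sub_cont.
End ProductGroup.

Definition is_subgroup (M : zmodType) (S : set M) : Prop :=
  S 0 /\ forall a b, S a -> S b -> S (a - b).

Lemma subgroupN (M : zmodType) (S : set M) a : is_subgroup S -> S a -> S (- a).
Proof. by move=> [S0 SB] Sa; rewrite -sub0r; exact: SB. Qed.

Lemma subgroupD (M : zmodType) (S : set M) a b :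
  is_subgroup S -> S a -> S b -> S (a + b).
Proof. by move=> SS Sa Sb; rewrite -[b]opprK; apply: SS.2 => //; exact: subgroupN. Qed.

Section SubgroupTopology.
Variables (Y : Type) (M : topologicalZmodType) (f : Y -> M).
Hypotheses (f_inj : injective f) (f_subgroup : is_subgroup (range f)).

Definition subgroup_tzmod of injective f & is_subgroup (range f) : Type := Y.
Local Notation W := (subgroup_tzmod f_inj f_subgroup).

HB.instance Definition _ := gen_eqMixin W.
HB.instance Definition _ := gen_choiceMixin W.

Let lift m (fm : range f m) : W := s2val (cid2 fm).
Let liftK m fm : f (@lift m fm) = m.
Proof. by rewrite /lift; case: cid2. Qed.
Let range_f (y : W) : range f (f y). Proof. by exists y. Qed.

Let zero := lift f_subgroup.1.
Let opp y := lift (subgroupN f_subgroup (range_f y)).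
Let add y z := lift (subgroupD f_subgroup (range_f y) (range_f z)).

Let addA : associative add.
Proof. by move=> y z w; apply: f_inj; rewrite !liftK addrA. Qed.
Let addC : commutative add.
Proof. by move=> y z; apply: f_inj; rewrite !liftK addrC. Qed.
Let add0 : left_id zero add.
Proof. by move=> y; apply: f_inj; rewrite !liftK add0r. Qed.
Let addN : left_inverse zero opp add.
Proof. by move=> y; apply: f_inj; rewrite !liftK addNr. Qed.

HB.instance Definition _ := GRing.isZmodule.Build W addA addC add0 addN.

Lemma subgroup_tzmod_sub (y z : W) : f (y - z) = f y - f z.
Proof. by rewrite /GRing.add /= !liftK. Qed.

HB.instance Definition _ :=
  Topological.copy W (initial_topology (f : W -> M)).

Let f_continuous : continuous (f : W -> M).
Proof. exact: (@initial_continuous _ _ (f : W -> M)). Qed.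

Let sub_cont : continuous (fun yz : W * W => yz.1 - yz.2).
Proof.
apply: (@continuous_comp_initial _ _ _ (f : W -> M)) => yz.
rewrite (_ : _ \o _ = fun yz : W * W => f yz.1 - f yz.2); last first.
  by apply: funext => ?; exact: subgroup_tzmod_sub.
by apply: continuousB_at; apply: continuous_comp;
  by [exact: cvg_fst | exact: cvg_snd | exact: f_continuous].
Qed.

HB.instance Definition _ :=
  PreTopologicalNmodule_isTopologicalZmodule.Build W sub_cont.

Lemma subgroup_tzmod_tembedding : tembedding (f : W -> M).
Proof.
split => //; first by split; [exact: subgroup_tzmod_sub | exact: f_continuous].
by move=> U [V oV <-]; exists V.
Qed.

End SubgroupTopology.

Section Embedding.
Variables (F M : topologicalZmodType) (f : F -> M).
Hypothesis f_emb : tembedding f.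

Lemma tembedding_continuousP (X : topologicalType) (g : X -> F) x :
  {for x, continuous g} <-> {for x, continuous (f \o g)}.
Proof.
have [[_ f_cont] _ f_open] := f_emb.
split=> [g_cont | fg_cont]; first exact: (continuous_comp g_cont (f_cont (g x))).
move=> U; rewrite nbhsE => -[_ [/f_open [V [oV ->]] Vfgx] VU].
apply: (filterS (preimage_subset VU)).
by apply: fg_cont; exact: open_nbhs_nbhs.
Qed.

Lemma tembedding_closure (X : set F) z : closure (f @` X) (f z) -> closure X z.
Proof.
have [_ _ f_open] := f_emb.
move=> fXz U; rewrite nbhsE => -[_ [/f_open [V [oV ->]] Vfz] VU].
have [_ [[x Xx <-] Vfx]] := fXz V (open_nbhs_nbhs (conj oV Vfz)).
by exists x; split => //; exact: VU.
Qed.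

Lemma cont_bihom_tembedding (G H : topologicalZmodType) (b : G -> H -> M)
    (b' : G -> H -> F) :
  (forall x y, f (b' x y) = b x y) -> cont_bihom b -> cont_bihom b'.
Proof.
have [[f_sub _] f_inj _] := f_emb.
move=> fb' [bl br b0]; split.
- move=> x; split=> [y z | y]; first by apply: f_inj; rewrite f_sub !fb' (bl x).1.
  apply/tembedding_continuousP.
  have -> : f \o b' x = b x by apply: funext => z; exact: fb'.
  exact: (bl x).2.
- move=> y; split=> [x z | x]; first by apply: f_inj; rewrite f_sub !fb' (br y).1.
  apply/tembedding_continuousP.
  have -> : f \o b'^~ y = b^~ y by apply: funext => z; exact: fb'.
  exact: (br y).2.
- apply/tembedding_continuousP.
  have -> : f \o (fun z => b' z.1 z.2) = (fun z => b z.1 z.2).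
    by apply: funext => z; exact: fb'.
  exact: b0.
Qed.

End Embedding.

Section CodedSubgroup.
Variables (M : topologicalZmodType) (S : set M) (C : Type) (e : M -> C).
Hypotheses (S_subgroup : is_subgroup S)
  (e_inj : forall a b, S a -> S b -> e a = e b -> a = b).

Let decode_raw (c : {c : C | (e @` S) c}) : M := s2val (cid2 (svalP c)).

Let decode_rawP c : S (decode_raw c) /\ e (decode_raw c) = sval c.
Proof. by rewrite /decode_raw; case: cid2. Qed.

Let decode_raw_inj : injective decode_raw.
Proof.
move=> c d cd; apply: eq_sig_hprop => [x|]; first exact: Prop_irrelevance.
by rewrite -(decode_rawP c).2 -(decode_rawP d).2 cd.
Qed.

Let range_decode_raw : range decode_raw = S.
Proof.
apply/seteqP; split=> [_ [c _ <-]|a Sa]; first exact: (decode_rawP c).1.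
have Sea : (e @` S) (e a) by exists a.
exists (exist _ (e a) Sea) => //; have [Sd ed] := decode_rawP (exist _ (e a) Sea).
exact: e_inj.
Qed.

Let decode_raw_subgroup : is_subgroup (range decode_raw).
Proof. by rewrite range_decode_raw. Qed.

Definition coded_subgroup : topologicalZmodType :=
  subgroup_tzmod decode_raw_inj decode_raw_subgroup.

Definition decode : coded_subgroup -> M := decode_raw.

Lemma decode_tembedding : tembedding decode.
Proof. exact: subgroup_tzmod_tembedding. Qed.

Lemma range_decode : range decode = S.
Proof. exact: range_decode_raw. Qed.

Definition encode a (Sa : S a) : coded_subgroup := exist _ (e a) (ex_intro2 _ _ a Sa erefl).

Lemma encodeK a (Sa : S a) : decode (encode Sa) = a.
Proof. by have [Sd ed] := decode_rawP (encode Sa); exact: e_inj. Qed.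

End CodedSubgroup.

Section FormalSums.
Variables (G H : Type) (M : zmodType) (b : G -> H -> M).

Definition zsum (s : seq (G * H) * seq (G * H)) : M :=
  \sum_(p <- s.1) b p.1 p.2 - \sum_(p <- s.2) b p.1 p.2.

Definition zspan : set M := range zsum.

Lemma zspan_subgroup : is_subgroup zspan.
Proof.
split; first by exists ([::], [::]) => //; rewrite /zsum !big_nil subrr.
move=> _ _ [s1 _ <-] [s2 _ <-]; exists (s1.1 ++ s2.2, s1.2 ++ s2.1) => //.
by rewrite /zsum !big_cat /= opprB opprD addrACA.
Qed.

Lemma zspan_gen x y : zspan (b x y).
Proof. by exists ([:: (x, y)], [::]) => //; rewrite /zsum big_seq1 big_nil subr0. Qed.

End FormalSums.

Section FormalSumsHom.
Variables (G H : Type) (M N : zmodType) (b : G -> H -> M).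

Lemma zsum_hom (h : M -> N) : {morph h : u v / u - v} ->
  forall s, h (zsum b s) = zsum (fun x y => h (b x y)) s.
Proof.
move=> hB s; pose h' : {additive M -> N} := HB.pack h (GRing.isZmodMorphism.Build M N h hB).
by rewrite -[h]/(h' : _ -> _) /zsum raddfB !raddf_sum.
Qed.

Lemma zspan_hom (h : M -> N) : {morph h : u v / u - v} ->
  h @` zspan b = zspan (fun x y => h (b x y)).
Proof.
move=> hB; apply/seteqP; split=> [_ [_ [s _ <-] <-]|_ [s _ <-]].
  by exists s; rewrite ?zsum_hom.
by exists (zsum b s); [exists s | rewrite zsum_hom].
Qed.

Lemma hom_eq_zspan (h1 h2 : M -> N) :
  {morph h1 : u v / u - v} -> {morph h2 : u v / u - v} ->
  (forall x y, h1 (b x y) = h2 (b x y)) -> forall m, zspan b m -> h1 m = h2 m.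
Proof.
move=> h1B h2B h12 _ [s _ <-]; rewrite !zsum_hom //.
by congr zsum; apply/funext => x; apply/funext => y; exact: h12.
Qed.

End FormalSumsHom.

Lemma closure_subgroup (M : topologicalZmodType) (S : set M) :
  is_subgroup S -> is_subgroup (closure S).
Proof.
move=> [S0 SB]; split; first exact: subset_closure.
move=> a c Sa Sc U /(@sub_continuous M (a, c))[[Ua Uc] [/= nUa nUc] UaUc].
have [a' [Sa' Ua']] := Sa Ua nUa; have [c' [Sc' Uc']] := Sc Uc nUc.
by exists (a' - c'); split; [exact: SB | exact: (UaUc (a', c'))].
Qed.

Lemma continuous_eq_closure (X A : topologicalType) (h1 h2 : X -> A) (D : set X) z :
  hausdorff_space A -> {for z, continuous h1} -> {for z, continuous h2} ->
  (forall x, D x -> h1 x = h2 x) -> closure D z -> h1 z = h2 z.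
Proof.
move=> A_haus h1z h2z h12 Dz; apply: A_haus => U1 U2 nU1 nU2.
have n1 : nbhs z (h1 @^-1` U1) := h1z U1 nU1.
have n2 : nbhs z (h2 @^-1` U2) := h2z U2 nU2.
have [x [Dx [U1x U2x]]] := Dz _ (filterI n1 n2).
by exists (h1 x); split; last rewrite h12.
Qed.

Lemma epi_bihom_zspan (B : tgclass) (G H T : topologicalZmodType) (t : G -> H -> T) :
  zspan t = setT -> epi_bihom B t.
Proof.
move=> tT A h1 h2 _ [h1B _] [h2B _] h12 z.
by apply: (hom_eq_zspan h1B h2B h12); rewrite tT.
Qed.

Lemma epi_bihom_dense (B : tgclass) (G H T : topologicalZmodType) (t : G -> H -> T) :
  (forall A, B A -> hausdorff_space A) -> closure (zspan t) = setT -> epi_bihom B t.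
Proof.
move=> B_haus tT A h1 h2 BA [h1B h1c] [h2B h2c] h12 z.
apply: (continuous_eq_closure (D := zspan t) (B_haus A BA) (h1c z) (h2c z)).
  exact: (hom_eq_zspan h1B h2B h12).
by rewrite tT.
Qed.

Lemma cont_hom_comp (X Y Z : topologicalZmodType) (f : X -> Y) (g : Y -> Z) :
  cont_hom f -> cont_hom g -> cont_hom (g \o f).
Proof.
move=> [fB f_cont] [gB g_cont]; split=> [x y|x]; first by rewrite /= fB gB.
exact: continuous_comp (f_cont x) (g_cont (f x)).
Qed.

Lemma cont_hom_id (X : topologicalZmodType) : cont_hom (@id X).
Proof. by split=> // x; exact: cvg_id. Qed.

Lemma tensor_unique (B : tgclass) (G H T T' : topologicalZmodType)
    (t : G -> H -> T) (t' : G -> H -> T') :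
  is_tensor B t -> epi_bihom B t -> is_tensor B t' -> epi_bihom B t' ->
  exists phi : T -> T', topiso phi /\ forall x y, phi (t x y) = t' x y.
Proof.
move=> [BT t_bihom t_univ] t_epi [BT' t'_bihom t'_univ] t'_epi.
have [f [f_hom ft]] := t_univ T' t' BT' t'_bihom.
have [g [g_hom gt']] := t'_univ T t BT t_bihom.
have gK : cancel f g.
  apply: (t_epi T (g \o f) id BT (cont_hom_comp f_hom g_hom) (cont_hom_id T)).
  by move=> x y /=; rewrite -ft -gt'.
have fK : cancel g f.
  apply: (t'_epi T' (f \o g) id BT' (cont_hom_comp g_hom f_hom) (cont_hom_id T')).
  by move=> x y /=; rewrite -gt' -ft.
by exists f; split=> [|x y]; [split=> //; exists g; split=> //; case: g_hom | rewrite ft].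
Qed.

Lemma has_unique_tensor_of_epi (B : tgclass) :
  (forall G H : topologicalZmodType, B G -> B H ->
     exists (T : topologicalZmodType) (t : G -> H -> T), is_tensor B t /\ epi_bihom B t) ->
  has_unique_tensor B.
Proof.
move=> tensor_ex G H BG BH; split; first exact: tensor_ex.
by move=> T T' t t'; exact: tensor_unique.
Qed.

Section SmallBihoms.
Variables (B : tgclass) (G H : topologicalZmodType) (C : Type).

(* Indexing by all groups of [B] would put the product in a larger universe;
   carriers that are subsets of a fixed [C] keep the index small. *)
Record small_bihom := SmallBihom {
  sb_support : set C;
  sb_class : TopologicalZmodule.axioms_ {c : C | sb_support c};
  sb_map : G -> H -> TopologicalZmodule.Pack sb_class;
  sb_mem : B (TopologicalZmodule.Pack sb_class);
  sb_cont_bihom : cont_bihom sb_map }.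

Definition sb_target (i : small_bihom) : topologicalZmodType :=
  TopologicalZmodule.Pack (sb_class i).

Definition small_prod : topologicalZmodType := prod_topology sb_target.

Definition small_diag x y : small_prod := fun i => sb_map i x y.

Lemma small_prod_tproduct : is_tproduct (fun i (p : small_prod) => p i).
Proof.
split=> [i|p|X f].
- by split=> //; exact: prod_topology_proj_continuous.
- by exists p; split=> // q qp; apply: functional_extensionality_dep => i; rewrite qp.
- split=> [f_cont i x|fi_cont x]; last by apply/prod_topology_continuousP => i; exact: fi_cont.
  exact: (proj1 (prod_topology_continuousP f x) (f_cont x) i).
Qed.

Lemma small_prod_mem : product_closed B -> B small_prod.
Proof. by move=> B_prod; apply: B_prod small_prod_tproduct => i; exact: sb_mem. Qed.

Lemma small_diag_cont_bihom : cont_bihom small_diag.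
Proof.
split=> [x|y|]; last by apply/prod_topology_continuousP => i; case: (sb_cont_bihom i).
- split=> [y z|y].
    apply: functional_extensionality_dep => i.
    by case: (sb_cont_bihom i) => bl _ _; exact: (bl x).1.
  by apply/prod_topology_continuousP => i; case: (sb_cont_bihom i) => bl _ _; exact: (bl x).2.
- split=> [x z|x].
    apply: functional_extensionality_dep => i.
    by case: (sb_cont_bihom i) => _ br _; exact: (br y).1.
  by apply/prod_topology_continuousP => i; case: (sb_cont_bihom i) => _ br _; exact: (br y).2.
Qed.

Definition factors_small (A : topologicalZmodType) (b : G -> H -> A) :=
  exists (i : small_bihom) (f : sb_target i -> A),
    cont_hom f /\ forall x y, f (sb_map i x y) = b x y.

Lemma factors_small_coded (A : topologicalZmodType) (b : G -> H -> A)
    (S : set A) (e : A -> C) :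
  B A -> cont_bihom b -> is_subgroup S -> (forall x y, S (b x y)) ->
  (forall a c, S a -> S c -> e a = e c -> a = c) ->
  (forall (F : topologicalZmodType) (f : F -> A), tembedding f -> range f = S -> B F) ->
  factors_small b.
Proof.
move=> BA b_bihom S_subgroup Sb e_inj B_sub.
pose F := coded_subgroup S_subgroup e_inj.
pose b' x y : F := encode S_subgroup e_inj (Sb x y).
have b'K x y : decode (b' x y) = b x y by exact: encodeK.
have dec_emb := decode_tembedding S_subgroup e_inj.
exists (SmallBihom (B_sub _ _ dec_emb (range_decode S_subgroup e_inj))
                   (cont_bihom_tembedding dec_emb b'K b_bihom)).
by exists (@decode _ _ _ _ S_subgroup e_inj); split=> //; case: dec_emb.
Qed.

Lemma small_tensor (S : set small_prod) :
  product_closed B -> is_subgroup S -> (forall x y, S (small_diag x y)) ->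
  (forall (F : topologicalZmodType) (f : F -> small_prod),
     tembedding f -> range f = S -> B F) ->
  (forall (A : topologicalZmodType) (b : G -> H -> A),
     B A -> cont_bihom b -> factors_small b) ->
  exists (T : topologicalZmodType) (f : T -> small_prod) (t : G -> H -> T),
    [/\ is_tensor B t, tembedding f, range f = S & forall x y, f (t x y) = small_diag x y].
Proof.
move=> B_prod S_subgroup S_diag B_sub small.
(* With the identity code, [coded_subgroup] is [S] with the subspace topology. *)
have id_inj a c : S a -> S c -> id a = id c -> a = c by [].
pose t x y := encode S_subgroup id_inj (S_diag x y).
have tK x y : decode (t x y) = small_diag x y by exact: encodeK.
have dec_emb := decode_tembedding S_subgroup id_inj.
exists (coded_subgroup S_subgroup id_inj), (decode (e_inj := id_inj)), t.
split=> //; last exact: range_decode.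
split; first exact: B_sub dec_emb (range_decode _ _).
  exact: (cont_bihom_tembedding dec_emb tK small_diag_cont_bihom).
move=> A b BA b_bihom; have [i [f [f_hom fb]]] := small A b BA b_bihom.
have [proj_hom _ _] := small_prod_tproduct.
exists (f \o (fun p : small_prod => p i) \o decode (e_inj := id_inj)).
split=> [|x y /=]; last by rewrite tK -fb.
by apply: cont_hom_comp f_hom; apply: cont_hom_comp (proj_hom i); case: dec_emb.
Qed.

End SmallBihoms.

Lemma fibre_inj (X Y : Type) (f : X -> Y) a c :
  range f a -> f @^-1` [set a] = f @^-1` [set c] -> a = c.
Proof. by move=> [s _ <-] fibre_eq; have : (f @^-1` [set c]) s by rewrite -fibre_eq. Qed.

Definition nbhs_trace (X : Type) (A : topologicalType) (f : X -> A) (a : A) : set (set X) :=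
  [set U | exists2 V, nbhs a V & f @^-1` V `<=` U].

Lemma nbhs_trace_inj (X : Type) (A : topologicalType) (f : X -> A) a c :
  hausdorff_space A -> closure (range f) c -> nbhs_trace f a = nbhs_trace f c -> a = c.
Proof.
move=> A_haus fc trace_eq; apply: A_haus => U1 U2 nU1 nU2.
have [V nV VU1] : nbhs_trace f c (f @^-1` U1) by rewrite -trace_eq; exists U1.
have [_ [[s _ <-] [Vfs U2fs]]] := fc _ (filterI nV nU2).
by exists (f s); split=> //; exact: VU1.
Qed.

Lemma SC_variety_epi_tensor (B : tgclass) : SC_variety B ->
  forall G H : topologicalZmodType, B G -> B H ->
    exists (T : topologicalZmodType) (t : G -> H -> T), is_tensor B t /\ epi_bihom B t.
Proof.
move=> [_ B_sub B_prod] G H _ _.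
pose C := set (seq (G * H) * seq (G * H)).
have [T [f [t [t_tensor f_emb f_range ft]]]] :=
  @small_tensor B G H C (zspan (@small_diag B G H C)) B_prod (zspan_subgroup _) (zspan_gen _)
    (fun F f f_emb _ => B_sub _ _ f (small_prod_mem G H C B_prod) f_emb)
    (fun A b BA b_bihom => factors_small_coded (e := fun a => zsum b @^-1` [set a])
       BA b_bihom (zspan_subgroup b) (zspan_gen b) (fun a c a_span _ => fibre_inj a_span)
       (fun F f f_emb _ => B_sub _ _ f BA f_emb)).
exists T, t; split=> //; apply: epi_bihom_zspan.
have [[f_sub _] f_inj _] := f_emb.
apply/seteqP; split=> // z _.
rewrite -(image_inj f_inj) (zspan_hom _ f_sub).
have -> : (fun x y => f (t x y)) = @small_diag B G H C by apply/funext => x; apply/funext.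
by rewrite -f_range; exists z.
Qed.

Lemma SCbar_variety_epi_tensor (B : tgclass) : SCbar_variety_H B ->
  forall G H : topologicalZmodType, B G -> B H ->
    exists (T : topologicalZmodType) (t : G -> H -> T), is_tensor B t /\ epi_bihom B t.
Proof.
move=> [B_haus _ B_csub B_prod] G H _ _.
pose C := set (set (seq (G * H) * seq (G * H))).
have B_closure (A F : topologicalZmodType) (S : set A) (f : F -> A) :
    B A -> tembedding f -> range f = closure S -> B F.
  by move=> BA f_emb f_range; apply: B_csub BA f_emb _; rewrite f_range; exact: closed_closure.
have [T [f [t [t_tensor f_emb f_range ft]]]] :=
  @small_tensor B G H C (closure (zspan (@small_diag B G H C))) B_prod
    (closure_subgroup (zspan_subgroup _)) (fun x y => subset_closure (zspan_gen _ x y))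
    (fun F f => B_closure _ _ _ f (small_prod_mem G H C B_prod))
    (fun A b BA b_bihom => factors_small_coded (e := nbhs_trace (zsum b))
       BA b_bihom (closure_subgroup (zspan_subgroup b))
       (fun x y => subset_closure (zspan_gen b x y))
       (fun a c _ c_span => nbhs_trace_inj (B_haus A BA) c_span)
       (fun F f => B_closure _ _ _ f BA)).
exists T, t; split=> //; apply: (epi_bihom_dense B_haus).
have [[f_sub _] _ _] := f_emb.
apply/seteqP; split=> // z _; apply: (tembedding_closure f_emb).
rewrite (zspan_hom _ f_sub).
have -> : (fun x y => f (t x y)) = @small_diag B G H C by apply/funext => x; apply/funext.
by rewrite -f_range; exists z.
Qed.

Theorem corollary2p10 :
  (forall B : tgclass, SC_variety B -> has_unique_tensor B) /\
  (forall B2 : tgclass, SCbar_variety_H B2 -> has_unique_tensor B2).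
Proof.
split=> B B_variety; apply: has_unique_tensor_of_epi.
  exact: SC_variety_epi_tensor.
exact: SCbar_variety_epi_tensor.
Qed.
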